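(* Let $G=(V,S,\sigma,w,\theta,\pi)$ be a restaking network with $\theta(s)>0$ and $\sum_{v'\in V}w(v',s)>0$ for all $s\in S$, and suppose the cost of a validator in an attack $\alpha$ is replaced by the all-or-nothing cost $c'_v(\alpha)=\sigma(v)$ if $\sum_{s\in S_\alpha}\alpha(v,s)>0$ and $c'_v(\alpha)=0$ otherwise (with total cost $C'(\alpha)=\sum_{v}c'_v(\alpha)$). If for every validator $v\in V$ $$\sum_{s\in S}\frac{w(v,s)}{\sum_{v'\in V}w(v',s)}\cdot\frac{\pi(s)}{\theta(s)}<\sigma(v),$$ then there is no attack $\alpha$ with $S_\alpha\neq\emptyset$ and $C'(\alpha)\le\Pi(\alpha)$; i.e., $G$ is secure under this cost model.
   Context: A restaking network is a tuple $G=(V,S,\sigma,w,\theta,\pi)$ with finite nonempty validator set $V$, finite service set $S$, stake $\sigma:V\to\mathbb{R}_{>0}$, allocation $w:V\times S\to\mathbb{R}_{\ge0}$ with $w(v,s)\le\sigma(v)$, thresholds $\theta:S\to[0,1]$ and prizes $\pi:S\to\mathbb{R}_{>0}$. An attack is $\alpha:V\times S\to\mathbb{R}_{\ge0}$ with $\alpha(v,s)\le w(v,s)$; its attacked services are $S_\alpha=\{s:\sum_v\alpha(v,s)\ge\theta(s)\sum_v w(v,s)\}$ and its prize is $\Pi(\alpha)=\sum_{s\in S_\alpha}\pi(s)$. *)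

From mathcomp Require Import all_boot all_order all_algebra.
Set Implicit Arguments. Unset Strict Implicit. Unset Printing Implicit Defensive.
Import Order.TTheory GRing.Theory Num.Theory.
Local Open Scope ring_scope.

Record network (R : realFieldType) (V S : finType) := Network {
  stake : V -> R;
  alloc : V -> S -> R;
  thr : S -> R;
  prize : S -> R;
  V_nonempty : (0 < #|V|)%N;
  stake_pos : forall v, 0 < stake v;
  alloc_ge0 : forall v s, 0 <= alloc v s;
  alloc_le_stake : forall v s, alloc v s <= stake v;
  thr_ge0 : forall s, 0 <= thr s;
  thr_le1 : forall s, thr s <= 1;
  prize_pos : forall s, 0 < prize s
}.

Section Defs.
Variables (R : realFieldType) (V S : finType) (G : network R V S).

Definition total_alloc (s : S) : R := \sum_(v : V) alloc G v s.

Definition is_attack (alpha : V -> S -> R) : Prop :=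
  forall v s, 0 <= alpha v s /\ alpha v s <= alloc G v s.

Definition attacked (alpha : V -> S -> R) : {set S} :=
  [set s | thr G s * total_alloc s <= \sum_(v : V) alpha v s].

Definition attack_prize (alpha : V -> S -> R) : R :=
  \sum_(s in attacked alpha) prize G s.

Definition aon_cost (alpha : V -> S -> R) (v : V) : R :=
  if 0 < \sum_(s in attacked alpha) alpha v s then stake G v else 0.

Definition aon_total_cost (alpha : V -> S -> R) : R :=
  \sum_(v : V) aon_cost alpha v.

End Defs.

(* Call a validator costly when it puts positive attack weight on some attacked service; only costly
   validators pay, and only they can push a service over its threshold.  So each attacked
   service s satisfies theta(s) W(s) <= sum over costly v of w(v,s), i.e. its prize is covered
   by the costly validators' shares w(v,s)/W(s) * pi(s)/theta(s).  Summing over attacked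
   services bounds the prize by the costly validators' total shares, which by hypothesis is
   strictly below their total stake, the cost -- as long as some validator is costly, which
   an attacked service with positive threshold forces. *)

From mathcomp Require Import all_boot all_order all_algebra.
From mathcomp Require Import ring.
Set Implicit Arguments. Unset Strict Implicit. Unset Printing Implicit Defensive.
Import Order.TTheory GRing.Theory Num.Theory.
Local Open Scope ring_scope.

Section Security.
Variables (R : realFieldType) (V S : finType) (G : network R V S).
Hypothesis thr_gt0 : forall s, 0 < thr G s.
Hypothesis total_alloc_gt0 : forall s, 0 < total_alloc G s.

Definition costly (alpha : V -> S -> R) : {set V} :=
  [set v | 0 < \sum_(s in attacked G alpha) alpha v s].

Definition prize_share (v : V) (s : S) : R :=
  (alloc G v s / total_alloc G s) * (prize G s / thr G s).

Lemma prize_share_ge0 v s : 0 <= prize_share v s.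
Proof.
by rewrite mulr_ge0 ?divr_ge0 ?alloc_ge0 ?ltW ?prize_pos.
Qed.

Lemma aon_total_costE alpha :
  aon_total_cost G alpha = \sum_(v in costly alpha) stake G v.
Proof.
rewrite /aon_total_cost [RHS]big_mkcond; apply: eq_bigr => v _.
by rewrite /aon_cost inE.
Qed.

Lemma attack_not_costly alpha v s : is_attack G alpha ->
  v \notin costly alpha -> s \in attacked G alpha -> alpha v s = 0.
Proof.
move=> att; rewrite inE -leNgt => sum_le0 s_att.
have alpha_ge0 i : 0 <= alpha v i by case: (att v i).
have sum0 : \sum_(i in attacked G alpha) alpha v i = 0.
  by apply/eqP; rewrite eq_le sum_le0 sumr_ge0.
exact: (psumr_eq0P (fun i _ => alpha_ge0 i) sum0).
Qed.

Lemma attack_mass_costly alpha s : is_attack G alpha -> s \in attacked G alpha ->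
  \sum_(v : V) alpha v s = \sum_(v in costly alpha) alpha v s.
Proof.
move=> att s_att; rewrite [RHS]big_mkcond; apply: eq_bigr => v _.
by case: ifP => // /negbT v_free; rewrite attack_not_costly.
Qed.

Lemma attacked_alloc_costly alpha s : is_attack G alpha -> s \in attacked G alpha ->
  thr G s * total_alloc G s <= \sum_(v in costly alpha) alloc G v s.
Proof.
move=> att s_att; move: (s_att); rewrite inE => /le_trans; apply.
by rewrite attack_mass_costly //; apply: ler_sum => v _; case: (att v s).
Qed.

Lemma prize_le_costly_share alpha s : is_attack G alpha -> s \in attacked G alpha ->
  prize G s <= \sum_(v in costly alpha) prize_share v s.
Proof.
move=> att s_att.
have thrW_gt0 : 0 < thr G s * total_alloc G s by rewrite mulr_gt0.
have share_sum : \sum_(v in costly alpha) prize_share v s =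
    (\sum_(v in costly alpha) alloc G v s) * (prize G s / (thr G s * total_alloc G s)).
  rewrite mulr_suml; apply: eq_bigr => v _.
  by rewrite /prize_share invfM; ring.
rewrite share_sum -[leLHS](divfK (lt0r_neq0 thrW_gt0)) mulrC.
apply: ler_wpM2r; last exact: attacked_alloc_costly.
by rewrite divr_ge0 // ltW // prize_pos.
Qed.

Lemma attack_prize_le_costly_share alpha : is_attack G alpha ->
  attack_prize G alpha <= \sum_(v in costly alpha) \sum_(s : S) prize_share v s.
Proof.
move=> att.
apply: (@le_trans _ _ (\sum_(s in attacked G alpha) \sum_(v in costly alpha)
    prize_share v s)); first by apply: ler_sum => s; apply: prize_le_costly_share.
rewrite exchange_big; apply: ler_sum => v _.
rewrite [leRHS](bigID [in attacked G alpha]) lerDl.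
by apply: sumr_ge0 => s _; apply: prize_share_ge0.
Qed.

Lemma costly_neq0 alpha : is_attack G alpha -> attacked G alpha != set0 ->
  costly alpha != set0.
Proof.
move=> att /set0Pn[s s_att].
have := s_att; rewrite inE attack_mass_costly // => thrW_le.
by apply: contraTneq thrW_le => ->; rewrite big_set0 -ltNge mulr_gt0.
Qed.

End Security.

Theorem mainTheorem3 (R : realFieldType) (V S : finType) (G : network R V S) :
  (forall s : S, 0 < thr G s) ->
  (forall s : S, 0 < total_alloc G s) ->
  (forall v : V,
     \sum_(s : S) (alloc G v s / total_alloc G s) * (prize G s / thr G s)
       < stake G v) ->
  ~ exists alpha : V -> S -> R,
      [/\ is_attack G alpha,
          attacked G alpha != set0
        & aon_total_cost G alpha <= attack_prize G alpha].
Proof.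
move=> thr_gt0 total_gt0 share_lt_stake [alpha [att some_attacked cost_le_prize]].
have /set0Pn[u u_costly] := costly_neq0 thr_gt0 total_gt0 att some_attacked.
have shares_lt_cost : \sum_(v in costly G alpha) \sum_(s : S) prize_share G v s
    < aon_total_cost G alpha.
  rewrite aon_total_costE; apply: ltr_sum => [|v _]; last exact: share_lt_stake.
  by apply/hasP; exists u; rewrite ?mem_index_enum.
have prize_le_shares := attack_prize_le_costly_share thr_gt0 total_gt0 att.
by have := le_lt_trans (le_trans cost_le_prize prize_le_shares) shares_lt_cost;
  rewrite ltxx.
Qed.
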